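(* Consider the multicast coalitional game with player set $\mathcal{N}=\{1,\ldots,N\}$ and value function $$v(S)=\sum_{i\in S}U_i-\sum_{i\in S}\frac{\alpha_i}{R_S}-\frac{\beta+\gamma}{R_S},\qquad R_S=\min_{i\in S}R_i,$$ for nonempty $S\subseteq\mathcal{N}$. Suppose $R_i=R_0$ and $P_{Rx,i}=P_{Rx}$ for all $i\in\mathcal{N}$, so that $\alpha_i=\alpha:=aP_{Rx}X$ for all $i$. Let $$x_i=U_i-\frac{\alpha}{R_0}-\frac{\beta+\gamma}{NR_0},\qquad i\in\mathcal{N}.$$ Then the payoff profile $(x_1,\dots,x_N)$ lies in the core.
   Context: A transmitter multicasts a file of size $X>0$ bits to users $\mathcal{N}=\{1,\dots,N\}$. User $i$ has valuation $U_i\in\mathbb{R}$, downloads at rate $R_i>0$, and consumes receive power $P_{Rx,i}>0$; the transmitter transmits at power $P_{Tx}>0$. Costs per unit energy are $a>0$ at users and $b>0$ at the transmitter; bandwidth cost per second is $w>0$. Set $\alpha_i=aP_{Rx,i}X$, $\beta=bP_{Tx}X$, $\gamma=wX$. The core is the set of payoff vectors $(x_1,\dots,x_N)\in\mathbb{R}^N$ with $\sum_{i\in\mathcal{N}}x_i=v(\mathcal{N})$ and $\sum_{i\in S}x_i\ge v(S)$ for every nonempty $S\subseteq\mathcal{N}$. *)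

From mathcomp Require Import all_boot all_order all_algebra.
Set Implicit Arguments. Unset Strict Implicit. Unset Printing Implicit Defensive.
Import Order.TTheory GRing.Theory Num.Theory.
Local Open Scope ring_scope.

Section Game.
Variables (R : realFieldType) (N : nat).

(* R_S = min_{i in S} Rate i  (only meaningful for nonempty S; for S = set0
   an arbitrary value 1 is returned, never used). *)
Definition rate_min (Rate : 'I_N -> R) (S : {set 'I_N}) : R :=
  match [pick i in S] with
  | Some i0 => \big[Num.min/Rate i0]_(i in S) Rate i
  | None => 1
  end.

Definition multicast_value (U : 'I_N -> R) (alpha : 'I_N -> R) (beta gamma : R)
    (Rate : 'I_N -> R) (S : {set 'I_N}) : R :=
  \sum_(i in S) U i - \sum_(i in S) alpha i / rate_min Rate S
    - (beta + gamma) / rate_min Rate S.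

Definition in_core (v : {set 'I_N} -> R) (x : 'I_N -> R) : Prop :=
  \sum_(i < N) x i = v [set: 'I_N] /\
  forall S : {set 'I_N}, S != set0 -> \sum_(i in S) x i >= v S.

End Game.

(** The proposed payoff charges each user its own cost
    plus a [1/N] share of the shared cost, so the grand coalition is charged
    exactly its value, while a coalition [S] is charged only [#|S|/N <= 1] of
    the shared cost, hence at most what it would pay on its own. *)
From mathcomp Require Import all_boot all_order all_algebra.
From mathcomp Require Import ring.
Import Order.TTheory GRing.Theory Num.Theory.
Local Open Scope ring_scope.

Lemma rate_min_const {R : realFieldType} {N : nat} {Rate : 'I_N -> R} {r : R}
    {S : {set 'I_N}} :
  S != set0 -> {in S, forall i, Rate i = r} -> rate_min Rate S = r.
Proof.
move=> /set0Pn[j jS] RateS; rewrite /rate_min.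
case: pickP => [i0 i0S|noS]; last by rewrite noS in jS.
apply: (big_ind (fun x => x = r)); first exact: RateS.
  by move=> x y -> ->; rewrite minxx.
exact: RateS.
Qed.

Section UniformMulticast.
Variables (R : realFieldType) (N : nat).
Variables (U alpha Rate : 'I_N -> R) (beta gamma c r : R).
Hypotheses (Rate_const : forall i, Rate i = r) (alpha_const : forall i, alpha i = c).

Let v := multicast_value U alpha beta gamma Rate.

Lemma multicast_value_uniform (S : {set 'I_N}) : S != set0 ->
  v S = \sum_(i in S) U i - c / r *+ #|S| - (beta + gamma) / r.
Proof.
move=> S0; have rate_minS : rate_min Rate S = r.
  by apply: rate_min_const => // i _.
rewrite /v /multicast_value rate_minS -sumr_const.
by congr (_ - _ - _); apply: eq_bigr => i _; rewrite alpha_const.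
Qed.

Lemma even_split_in_core : (0 < N)%N -> 0 < r -> 0 <= beta + gamma ->
  in_core v (fun i => U i - c / r - (beta + gamma) / (N%:R * r)).
Proof.
move=> N_gt0 r_gt0 cost_ge0; set share := (beta + gamma) / (N%:R * r).
have shares_total : share *+ N = (beta + gamma) / r.
  rewrite -mulr_natr /share; field.
  by rewrite gt_eqF // pnatr_eq0 -lt0n N_gt0.
have sum_payoff (S : {set 'I_N}) : \sum_(i in S) (U i - c / r - share)
    = \sum_(i in S) U i - c / r *+ #|S| - share *+ #|S|.
  by rewrite !sumrB !sumr_const.
split.
  have setT0 : [set: 'I_N] != set0 by apply/set0Pn; exists (Ordinal N_gt0).
  rewrite multicast_value_uniform // -(eq_bigl _ _ (fun i => in_setT i)).
  by rewrite sum_payoff cardsT card_ord shares_total.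
move=> S S0; rewrite multicast_value_uniform // sum_payoff lerD2l lerN2.
rewrite -shares_total ler_wpMn2l //.
  by rewrite divr_ge0 // mulr_ge0 // ltW.
by rewrite -[X in (_ <= X)%N]card_ord max_card.
Qed.

End UniformMulticast.

Theorem proposition1 (R : realFieldType) (N : nat) (hN : (0 < N)%N)
  (X : R) (U : 'I_N -> R) (Rate : 'I_N -> R) (PRx : 'I_N -> R)
  (PTx a b w R0 P : R)
  (hX : 0 < X) (hRate : forall i, 0 < Rate i) (hPRx : forall i, 0 < PRx i)
  (hPTx : 0 < PTx) (ha : 0 < a) (hb : 0 < b) (hw : 0 < w)
  (hR0 : forall i, Rate i = R0) (hP : forall i, PRx i = P) :
  let alpha := fun i => a * PRx i * X in
  let beta := b * PTx * X in
  let gamma := w * X in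
  in_core (multicast_value U alpha beta gamma Rate)
    (fun i => U i - a * P * X / R0 - (beta + gamma) / (N%:R * R0)).
Proof.
move=> alpha beta gamma.
have alpha_const i : alpha i = a * P * X by rewrite /alpha hP.
have R0_gt0 : 0 < R0 by rewrite -(hR0 (Ordinal hN)).
apply: even_split_in_core => //.
by rewrite ltW // addr_gt0 // !mulr_gt0.
Qed.
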